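(* Fix a finite relational schema $\sigma$ and an integer $d\geq 2$, let $\mathbf{C}$ be a class of $\sigma$-databases of degree at most $d$ closed under removing tuples, and let $\mathbf{P}\subseteq\mathbf{C}$ be a property that is hyperfinite on $\mathbf{C}$. Let $\epsilon\in(0,1]$, and let $r\in\mathbb{N}$ and $\lambda\in(0,1]$ be such that for every $\mathcal{D}\in\mathbf{P}$ and $\mathcal{D}'\in\mathbf{C}$, if $\|\operatorname{h}_r(\mathcal{D})-\operatorname{h}_r(\mathcal{D}')\|_1\leq\lambda\min\{|D|,|D'|\}$ then $\mathcal{D}'$ is $\epsilon$-close to $\mathbf{P}$ in the $\operatorname{BDRD}_{+/-}$ model. Suppose the set $\operatorname{h}_r(\mathbf{P})$ is semilinear. Then there exist $n_{\min},n_{\max}\in\mathbb{N}$ and $f,\mu\in(0,1)$ such that for every $\mathcal{D}\in\mathbf{C}$ with $|D|>n_{\max}$: (1) if $\mathcal{D}\in\mathbf{P}$, then there exists $\mathcal{D}'\in\mathbf{P}$ with $n_{\min}\leq|D'|\leq n_{\max}$ and $\|\operatorname{dv}_r(\mathcal{D})-\operatorname{dv}_r(\mathcal{D}')\|_1\leq f-\mu$; and (2) if $\mathcal{D}$ is $\epsilon$-far from $\mathbf{P}$ in the $\operatorname{BDRD}_{+/-}$ model, then every $\mathcal{D}'\in\mathbf{P}$ with $n_{\min}\leq|D'|\leq n_{\max}$ satisfies $\|\operatorname{dv}_r(\mathcal{D})-\operatorname{dv}_r(\mathcal{D}')\|_1>f+\mu$.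
   Context: A schema $\sigma$ is a finite set of relation names with arities in $\mathbb{N}_{\geq 1}$. A $\sigma$-database $\mathcal{D}$ has a finite domain $D$ and a relation $R^{\mathcal{D}}\subseteq D^{\operatorname{ar}(R)}$ for each $R\in\sigma$. The Gaifman graph of $\mathcal{D}$ has vertex set $D$ and an edge between distinct $a,b$ whenever some tuple contains both; distances and connected components refer to it. The degree of an element is the number of tuples containing it; the degree of $\mathcal{D}$ is the maximum. Classes are closed under isomorphism; a property is an isomorphism-closed class. Hyperfinite: an $(\epsilon,k)$-partition of $\mathcal{D}$ on $n$ elements is obtained by removing at most $\epsilon n$ tuples so that every connected component has at most $k$ elements; $\mathbf{P}\subseteq\mathbf{C}$ is hyperfinite on $\mathbf{C}$ if there is a function $\rho$ such that for every $\epsilon\in(0,1]$ and $\mathcal{D}\in\mathbf{P}$ some $(\epsilon,\rho(\epsilon))$-partition of $\mathcal{D}$ lies in $\mathbf{C}$. Neighbourhoods: $N_r(a)$ is the set of elements at distance at most $r$ from $a$; the $r$-neighbourhood of $a$ is $(\mathcal{D}[N_r(a)],a)$; an $r$-type is a centre-preserving isomorphism class of $r$-neighbourhoods; $\operatorname{c}(r)$ is the (finite) number of $r$-types of degree at most $d$ over $\sigma$. $\operatorname{h}_r(\mathcal{D})\in\mathbb{N}^{\operatorname{c}(r)}$ counts the elements of each $r$-type; $\operatorname{dv}_r(\mathcal{D})=\operatorname{h}_r(\mathcal{D})/|D|$; $\operatorname{h}_r(\mathbf{P})=\{\operatorname{h}_r(\mathcal{D})\mid\mathcal{D}\in\mathbf{P}\}$.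 A set $M\subseteq\mathbb{N}^c$ is linear if $M=\{\bar v_0+a_1\bar v_1+\dots+a_k\bar v_k\mid a_i\in\mathbb{N}\}$ for some $\bar v_j\in\mathbb{N}^c$, and semilinear if it is a finite union of linear sets. $\operatorname{BDRD}_{+/-}$ model: $\operatorname{dist}_{+/-}(\mathcal{D},\mathcal{D}')$ is the minimum number of modifications (inserting an element, deleting an element together with all tuples containing it, inserting a tuple, deleting a tuple) applied to $\mathcal{D}$ and $\mathcal{D}'$ to make them isomorphic; they are $\epsilon$-close if $\operatorname{dist}_{+/-}(\mathcal{D},\mathcal{D}')\leq\epsilon d\min\{|D|,|D'|\}$, else $\epsilon$-far; $\mathcal{D}$ is $\epsilon$-close to $\mathbf{P}$ if it is $\epsilon$-close to some member of $\mathbf{P}$, else $\epsilon$-far from $\mathbf{P}$. *)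

From HB Require Import structures.
From mathcomp Require Import all_boot all_order all_algebra.
From mathcomp Require Import reals.
Set Implicit Arguments. Unset Strict Implicit. Unset Printing Implicit Defensive.
Import Order.TTheory GRing.Theory Num.Theory.

Record schema := Schema {
  rel_name : finType;
  arity : rel_name -> nat;
  arity_pos : forall R, 0 < arity R }.

Section Databases.
Variable s : schema.

Definition tagtuple (n : nat) : finType :=
  {R : rel_name s & (@arity s R).-tuple 'I_n}.
Definition tuples (n : nat) := {set tagtuple n}.

Definition elems n (t : tagtuple n) : seq 'I_n := tval (tagged t).

Definition maptag n m (f : 'I_n -> 'I_m) (t : tagtuple n) : tagtuple m :=
  Tagged (fun R => (@arity s R).-tuple 'I_m) (map_tuple f (tagged t)).

(* A database: domain 'I_dsize (|D| = dsize), and its set of tuples. *)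
Record db := DB { dsize : nat; dtup : tuples dsize }.

Definition deg n (T : tuples n) (a : 'I_n) : nat :=
  #|[set t in T | a \in elems t]|.
Definition deg_le n (T : tuples n) (d : nat) : bool := [forall a, deg T a <= d].

Definition adj n (T : tuples n) : rel 'I_n :=
  fun a b => (a != b) && [exists t in T, (a \in elems t) && (b \in elems t)].
Definition ball n (T : tuples n) (r : nat) (a : 'I_n) : {set 'I_n} :=
  iter r (fun B : {set 'I_n} => B :|: [set b | [exists c in B, adj T c b]]) [set a].
Definition comps_le n (T : tuples n) (k : nat) : bool :=
  [forall a, #|[set b | connect (adj T) a b]| <= k].

Definition hom_ok n m (T : tuples n) (U : tuples m) (f : {ffun 'I_n -> 'I_m}) :=
  [forall t : tagtuple n, (t \in T) == (maptag f t \in U)].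

Definition db_iso (D E : db) : Prop :=
  exists f : 'I_(dsize D) -> 'I_(dsize E),
    bijective f /\ forall t, (t \in dtup D) = (maptag f t \in dtup E).

(* bound on the size of an r-ball in a database of degree <= d *)
Definition maxar : nat := \max_(R : rel_name s) @arity s R.
Definition Mbound (d r : nat) : nat := (d * maxar + 1) ^ r.

Definition rstruct (m : nat) : finType := (tuples m * 'I_m)%type.
Definition rall (d r : nat) : finType := {m : 'I_(Mbound d r).+1 & rstruct m}.
Definition rtup d r (x : rall d r) : tuples (tag x) := (tagged x).1.
Definition rroot d r (x : rall d r) : 'I_(tag x) := (tagged x).2.

Definition rooted_iso d r (x y : rall d r) : bool :=
  [exists f : {ffun 'I_(tag x) -> 'I_(tag y)},
    [&& injectiveb f, f @: setT == setT, f (rroot x) == rroot y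
      & hom_ok (rtup x) (rtup y) f]].

Definition rvalid d r (x : rall d r) : bool :=
  (ball (rtup x) r (rroot x) == setT) && deg_le (rtup x) d.

(* canonical representative: the valid one of least enumeration rank
   in its isomorphism class *)
Definition rcanon d r (x : rall d r) : bool :=
  rvalid x && [forall y, rooted_iso y x ==> (enum_rank x <= enum_rank y)].

Definition rtype (d r : nat) : finType := {x : rall d r | rcanon x}.

Definition nbhd_iso n (T : tuples n) d r (a : 'I_n) (x : rall d r) : bool :=
  [exists f : {ffun 'I_(tag x) -> 'I_n},
    [&& injectiveb f, f @: setT == ball T r a, f (rroot x) == a
      & hom_ok (rtup x) T f]].

Definition hist (d r : nat) (D : db) : {ffun rtype d r -> nat} :=
  [ffun tau => #|[set a | nbhd_iso (dtup D) a (val tau : rall d r)]|].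

Definition partition_of (R : realFieldType) (eps : R) (k : nat) (D D' : db) : Prop :=
  exists T' : tuples (dsize D),
    [/\ D' = DB T', T' \subset dtup D,
        (#|dtup D :\: T'|%:R <= eps * (dsize D)%:R)%R & comps_le T' k].

Definition hyperfinite (R : realFieldType) (P C : db -> Prop) : Prop :=
  exists rho : R -> nat, forall eps : R, (0 < eps <= 1)%R ->
    forall D, P D -> exists D', partition_of eps (rho eps) D D' /\ C D'.

(* deleting an element (with all tuples containing it): D1 is D restricted
   to the image of an injection g : 'I_(|D|-1) -> 'I_|D| *)
Definition del_elem (D D1 : db) : Prop :=
  dsize D = (dsize D1).+1 /\
  exists g : 'I_(dsize D1) -> 'I_(dsize D),
    injective g /\ forall t, (t \in dtup D1) = (maptag g t \in dtup D).

Definition step (D D1 : db) : Prop :=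
  (exists n (T T1 : tuples n) (t : tagtuple n),
      D = DB T /\ D1 = DB T1 /\ (T1 = t |: T \/ T1 = T :\ t))
  \/ del_elem D D1 \/ del_elem D1 D.

Fixpoint steps (k : nat) (D E : db) : Prop :=
  match k with
  | 0 => D = E
  | k'.+1 => exists D1, step D D1 /\ steps k' D1 E
  end.

(* dist_{+/-}(D,D') <= eps d min(|D|,|D'|) *)
Definition eps_close (R : realFieldType) (d : nat) (eps : R) (D D' : db) : Prop :=
  exists (j j' : nat) (E E' : db),
    [/\ steps j D E, steps j' D' E', db_iso E E'
      & ((j + j')%:R <= eps * d%:R * (minn (dsize D) (dsize D'))%:R)%R].

Definition close_to (R : realFieldType) (d : nat) (eps : R) (P : db -> Prop) (D : db) :=
  exists D', P D' /\ eps_close d eps D D'.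

Definition far_from (R : realFieldType) (d : nat) (eps : R) (P : db -> Prop) (D : db) :=
  ~ close_to d eps P D.

Definition iso_closed (C : db -> Prop) := forall D E, C D -> db_iso D E -> C E.
Definition tuple_removal_closed (C : db -> Prop) :=
  forall n (T T' : tuples n), C (DB T) -> T' \subset T -> C (DB T').
Definition degree_le_class (d : nat) (C : db -> Prop) :=
  forall D, C D -> deg_le (dtup D) d.

Definition hR (R : realFieldType) d r (D : db) : {ffun rtype d r -> R} :=
  [ffun tau => ((hist d r D tau)%:R)%R].
Definition dv (R : realFieldType) d r (D : db) : {ffun rtype d r -> R} :=
  [ffun tau => ((hist d r D tau)%:R / (dsize D)%:R)%R].

End Databases.

Definition l1 (R : realFieldType) (I : finType) (u v : {ffun I -> R}) : R :=
  (\sum_(i : I) `|u i - v i|)%R.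

Definition lin_mem (I : finType) (v0 : {ffun I -> nat}) (vs : seq {ffun I -> nat})
    (v : {ffun I -> nat}) : Prop :=
  exists a : nat -> nat,
    forall i, v i = v0 i + \sum_(k < size vs) a k * (nth v0 vs k) i.

Definition semilinear_set (I : finType) (M : {ffun I -> nat} -> Prop) : Prop :=
  exists ls : seq ({ffun I -> nat} * seq {ffun I -> nat}),
    forall v, M v <-> exists2 p, p \in ls & lin_mem p.1 p.2 v.

Definition hist_set (s : schema) (d r : nat) (P : db s -> Prop)
    (v : {ffun rtype s d r -> nat}) : Prop :=
  exists D, P D /\ hist d r D = v.

(* In a database of degree at most d every element has exactly one r-type, so
   h_r(D) sums to |D| and the l1-distance of two histograms bounds the difference
   of the sizes.  A semilinear set is approximately closed under scaling by any
   t >= 0: rounding down the coefficients of t * (v0 + sum_k a_k v_k) costs at most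
   max(1, t) times a weight V of the linear set.  For (1), scaling h_r(D) down to
   mass K + V, with K of order V / lam, yields D' in P of size in [K, K + 2V] whose
   dv_r is lam/16-close to dv_r(D).  For (2), if dv_r(D) is lam/8-close to dv_r(D')
   with D' small, scaling h_r(D') up to mass |D| yields D'' in P with
   ||h_r(D'') - h_r(D)||_1 <= lam min(|D''|, |D|), so D is eps-close to P by the
   locality hypothesis. *)

From HB Require Import structures.
From mathcomp Require Import all_boot all_order all_algebra.
From mathcomp Require Import reals.
From mathcomp Require Import ring lra.
Import Order.TTheory GRing.Theory Num.Theory.
Set Implicit Arguments. Unset Strict Implicit. Unset Printing Implicit Defensive.

(** * Neighbourhood types *)

Lemma leq_card_bigcup (I T : finType) (A : {pred I}) (F : I -> {set T}) :
  #|\bigcup_(i in A) F i| <= \sum_(i in A) #|F i|.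
Proof.
apply: (big_ind2 (fun (U : {set T}) m => #|U| <= m)) => [|U m V n leUm leVn|//].
  by rewrite cards0.
exact: leq_trans (leq_card_setU U V) (leq_add leUm leVn).
Qed.

Section Tuples.
Variable s : schema.

Lemma elems_maptag n m (f : 'I_n -> 'I_m) (t : tagtuple s n) :
  elems (maptag f t) = map f (elems t).
Proof. by []. Qed.

Lemma maptag_comp n m k (f : 'I_m -> 'I_k) (g : 'I_n -> 'I_m) (t : tagtuple s n) :
  maptag f (maptag g t) = maptag (f \o g) t.
Proof. by case: t => R u; congr Tagged; apply: val_inj; rewrite /= map_comp. Qed.

Lemma eq_in_maptag n m (f g : 'I_n -> 'I_m) (t : tagtuple s n) :
  {in elems t, f =1 g} -> maptag f t = maptag g t.
Proof. by case: t => R u fg; congr Tagged; apply: val_inj; exact/eq_in_map. Qed.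

Lemma maptag_id_in n (f : 'I_n -> 'I_n) (t : tagtuple s n) :
  {in elems t, f =1 id} -> maptag f t = t.
Proof. by case: t => R u f_id; congr Tagged; apply: val_inj; exact: map_id_in. Qed.

Lemma maptag_inj n m (f : 'I_n -> 'I_m) : injective f -> injective (maptag (s:=s) f).
Proof.
move=> f_inj [R1 u1] [R2 u2] eq_t; have eqR : R1 = R2 by move: (congr1 tag eq_t).
subst R2; congr Tagged; apply: val_inj; apply: (inj_map f_inj).
exact: (congr1 (@elems s m) eq_t).
Qed.

Lemma hom_okP n m (T : tuples s n) (U : tuples s m) (f : {ffun 'I_n -> 'I_m}) :
  hom_ok T U f -> forall t, (t \in T) = (maptag f t \in U).
Proof. by move=> /forallP hom t; apply/eqP. Qed.

End Tuples.

Section Balls.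
Variables (s : schema) (n : nat) (T : tuples s n).

Lemma ballS k a :
  ball T k.+1 a = ball T k a :|: [set b | [exists c in ball T k a, adj T c b]].
Proof. by []. Qed.

Lemma ball_id a : a \in ball T 0 a.
Proof. exact: set11. Qed.

Lemma sub_ballS k a : ball T k a \subset ball T k.+1 a.
Proof. by rewrite ballS subsetUl. Qed.

Lemma sub_ball k k' a : k <= k' -> ball T k a \subset ball T k' a.
Proof.
elim: k' => [|k' IH]; first by rewrite leqn0 => /eqP ->.
by rewrite leq_eqVlt => /predU1P [-> //|/IH/subset_trans]; apply; exact: sub_ballS.
Qed.

Lemma mem_ballS_adj k a b c : b \in ball T k a -> adj T b c -> c \in ball T k.+1 a.
Proof.
by move=> bB bc; rewrite ballS in_setU inE; apply/orP; right; apply/existsP; exists b; rewrite bB.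
Qed.

Lemma card_elems_le (t : tagtuple s n) : #|[set e in elems t]| <= maxar s.
Proof.
rewrite cardsE (leq_trans (card_size _)) // /elems size_tuple.
exact: (@leq_bigmax (rel_name s) (@arity s) (tag t)).
Qed.

(* Each element of the ball lies in at most d tuples of at most maxar elements. *)
Lemma card_ball_le d k a : deg_le T d -> #|ball T k a| <= (d * maxar s + 1) ^ k.
Proof.
move=> /forallP T_deg; elim: k => [|k IH]; first by rewrite cards1.
set B := ball T k a.
pose nbrs c := \bigcup_(t in [set t in T | c \in elems t]) [set e in elems t].
have sub_nbrs : [set b | [exists c in B, adj T c b]] \subset \bigcup_(c in B) nbrs c.
  apply/subsetP => b; rewrite inE => /existsP [c /and3P [cB _ /existsP [t]]].
  case/and3P=> tT ct bt; apply/bigcupP; exists c => //; apply/bigcupP; exists t.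
    by rewrite inE tT ct.
  by rewrite inE.
have card_nbrs c : #|nbrs c| <= d * maxar s.
  apply: leq_trans (leq_card_bigcup _ _) _.
  apply: leq_trans; first by apply: leq_sum => t _; exact: card_elems_le.
  by rewrite sum_nat_const leq_mul2r T_deg orbT.
have card_all_nbrs : #|\bigcup_(c in B) nbrs c| <= #|B| * (d * maxar s).
  apply: leq_trans (leq_card_bigcup _ _) _.
  by rewrite -sum_nat_const; apply: leq_sum => c _; exact: card_nbrs.
rewrite ballS (leq_trans (leq_card_setU _ _)) //.
apply: leq_trans (leq_add (leqnn _) (subset_leq_card sub_nbrs)) _.
apply: leq_trans (leq_add (leqnn _) card_all_nbrs) _.
by rewrite -{1}(muln1 #|B|) -mulnDr addnC expnSr leq_mul2r IH orbT.
Qed.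

End Balls.

Section Embedding.
Variables (s : schema) (n : nat) (T : tuples s n) (m : nat) (U : tuples s m).
Variables (rt : 'I_m) (f : 'I_m -> 'I_n) (r : nat) (a : 'I_n).
Hypotheses (f_inj : injective f) (f_im : f @: setT = ball T r a) (f_rt : f rt = a).
Hypothesis f_hom : forall t, (t \in U) = (maptag f t \in T).

Let g (b : 'I_n) : 'I_m := odflt rt [pick j | f j == b].

Let fgK b : b \in ball T r a -> f (g b) = b.
Proof.
rewrite -f_im => /imsetP [j _ ->]; rewrite /g.
by case: pickP => [j' /eqP //|/(_ j)]; rewrite eqxx.
Qed.

Let gfK j : g (f j) = j.
Proof. by apply: f_inj; apply: fgK; rewrite -f_im imset_f. Qed.

(* A new neighbour b of c is reached through a tuple inside the r-ball of a,
   which g pulls back to a tuple of U. *)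
Lemma ball_sub_imset k : k <= r -> ball T k a \subset f @: ball U k rt.
Proof.
elim: k => [|k IH] lt_kr; first by rewrite sub1set -f_rt imset_f ?ball_id.
have {}IH := IH (ltnW lt_kr).
apply/subsetP => b; rewrite ballS in_setU => /orP [bB|].
  by apply: subsetP b bB; apply: subset_trans IH (imsetS _ (sub_ballS _ _ _)).
rewrite inE => /existsP [c /and3P [cB ncb /existsP [t /and3P [tT ct bt]]]].
have t_ball e : e \in elems t -> e \in ball T r a.
  move=> et; apply: subsetP (sub_ball T a lt_kr) _ _.
  have [<-|nce] := eqVneq c e; first exact: subsetP (sub_ballS _ _ _) _ cB.
  by apply: mem_ballS_adj cB _; rewrite /adj nce; apply/existsP; exists t; rewrite tT ct.
have tK : maptag f (maptag g t) = t.
  by rewrite maptag_comp; apply: maptag_id_in => e /t_ball /fgK.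
have /imsetP [c' c'B c_eq] := subsetP IH c cB; subst c.
apply/imsetP; exists (g b); last by rewrite fgK ?t_ball.
apply: mem_ballS_adj c'B _; apply/andP; split.
  by apply: contra ncb => /eqP ->; rewrite fgK ?t_ball.
apply/existsP; exists (maptag g t); rewrite f_hom tK tT elems_maptag /=.
by rewrite -[c'](gfK c') !map_f.
Qed.

Lemma ball_embeddingT : ball U r rt = setT.
Proof.
apply/eqP; rewrite eqEsubset subsetT; apply/subsetP => j _.
have : f j \in ball T r a by rewrite -f_im imset_f.
by case/(subsetP (ball_sub_imset (leqnn r)))/imsetP => j' j'B /f_inj ->.
Qed.

Lemma deg_le_embedding d : deg_le T d -> deg_le U d.
Proof.
move=> /forallP T_deg; apply/forallP => e; apply: leq_trans (T_deg (f e)).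
rewrite /deg -(card_imset _ (maptag_inj f_inj)); apply: subset_leq_card.
apply/subsetP => _ /imsetP [t + ->]; rewrite !inE -f_hom => /andP [-> et].
by rewrite elems_maptag map_f.
Qed.

End Embedding.

Section NeighbourhoodTypes.
Variables (s : schema) (d r n : nat) (T : tuples s n).
Hypothesis T_deg : deg_le T d.

Lemma nbhd_iso_rvalid a (x : rall s d r) : nbhd_iso T a x -> rvalid x.
Proof.
case/existsP=> f /and4P [/injectiveP f_inj /eqP f_im /eqP f_rt /hom_okP f_hom].
by rewrite /rvalid (ball_embeddingT f_inj f_im f_rt f_hom) eqxx (deg_le_embedding f_inj f_hom).
Qed.

Lemma rooted_iso_nbhd_iso a (x y : rall s d r) :
  rooted_iso y x -> nbhd_iso T a x -> nbhd_iso T a y.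
Proof.
case/existsP=> g /and4P [/injectiveP g_inj /eqP g_im /eqP g_rt /hom_okP g_hom].
case/existsP=> f /and4P [/injectiveP f_inj /eqP f_im /eqP f_rt /hom_okP f_hom].
apply/existsP; exists [ffun i => f (g i)]; apply/and4P; split.
- by apply/injectiveP => i j; rewrite !ffunE => /f_inj /g_inj.
- rewrite -f_im -g_im -imset_comp; apply/eqP/eq_imset => i; exact: ffunE.
- by rewrite ffunE g_rt f_rt.
- apply/forallP => t; apply/eqP; rewrite g_hom f_hom maptag_comp.
  by congr (_ \in T); apply: eq_in_maptag => i _; rewrite ffunE.
Qed.

(* Two neighbourhood witnesses f, f' of the same ball give the isomorphism f'^-1 \o f. *)
Lemma nbhd_iso_rooted_iso a (x y : rall s d r) :
  nbhd_iso T a x -> nbhd_iso T a y -> rooted_iso x y.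
Proof.
case/existsP=> f /and4P [/injectiveP f_inj /eqP f_im /eqP f_rt /hom_okP f_hom].
case/existsP=> f' /and4P [/injectiveP f'_inj /eqP f'_im /eqP f'_rt /hom_okP f'_hom].
pose g i := odflt (rroot y) [pick j | f' j == f i].
have f'gE i : f' (g i) = f i.
  have /imsetP [j _ ej] : f i \in f' @: setT by rewrite f'_im -f_im imset_f.
  by rewrite /g; case: pickP => [j' /eqP //|/(_ j)]; rewrite ej eqxx.
have g_inj : injective [ffun i => g i].
  by move=> i j /(congr1 f'); rewrite !ffunE !f'gE => /f_inj.
have card_xy : #|'I_(tag x)| = #|'I_(tag y)|.
  by rewrite -!cardsT -(card_imset _ f_inj) -(card_imset _ f'_inj) f_im f'_im.
apply/existsP; exists [ffun i => g i]; apply/and4P; split.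
- exact/injectiveP.
- by rewrite eqEcard subsetT cardsT -card_xy card_imset // cardsT leqnn.
- by rewrite ffunE; apply/eqP/f'_inj; rewrite f'gE f_rt f'_rt.
- apply/forallP => t; apply/eqP; rewrite f_hom f'_hom maptag_comp.
  by congr (_ \in T); apply: eq_in_maptag => i _ /=; rewrite ffunE f'gE.
Qed.

Lemma exists_nbhd_iso a : exists x : rall s d r, nbhd_iso T a x.
Proof.
set B := ball T r a.
have aB : a \in B by apply: subsetP (sub_ball T a (leq0n r)) _ (ball_id T a).
have small_B : #|B| < (Mbound s d r).+1 by rewrite ltnS card_ball_le.
pose U := [set t : tagtuple s #|B| | maptag (fun i => enum_val i) t \in T].
exists (existT (fun m : 'I_(Mbound s d r).+1 => rstruct s m) (Ordinal small_B)
          (U, enum_rank_in aB a)).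
apply/existsP; exists [ffun i : 'I_#|B| => (enum_val i : 'I_n)]; apply/and4P; split.
- by apply/injectiveP => i j; rewrite !ffunE => /enum_val_inj.
- apply/eqP/setP => b; apply/imsetP/idP => [[i _ ->]|bB]; first by rewrite ffunE enum_valP.
  by exists (enum_rank_in aB b); rewrite ?ffunE ?enum_rankK_in.
- by rewrite /rroot /= ffunE enum_rankK_in.
- apply/forallP => t; rewrite /rtup /= inE; apply/eqP; congr (_ \in T).
  by apply: eq_in_maptag => i _; rewrite ffunE.
Qed.

Lemma exists_rtype a : exists tau : rtype s d r, nbhd_iso T a (val tau).
Proof.
have [x0 nbhd_x0] := exists_nbhd_iso a.
have [x nbhd_x min_x] := arg_minnP (fun y : rall s d r => enum_rank y) nbhd_x0.
suff x_canon : rcanon x by exists (Sub x x_canon).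
rewrite /rcanon (nbhd_iso_rvalid nbhd_x); apply/forallP => y; apply/implyP => yx.
exact/min_x/(rooted_iso_nbhd_iso yx).
Qed.

Lemma rtype_unique a (tau1 tau2 : rtype s d r) :
  nbhd_iso T a (val tau1) -> nbhd_iso T a (val tau2) -> tau1 = tau2.
Proof.
move=> nbhd1 nbhd2; apply/val_inj/enum_rank_inj/val_inj/eqP.
have /andP [_ /forallP min1] := valP tau1; have /andP [_ /forallP min2] := valP tau2.
rewrite eqn_leq (implyP (min1 (val tau2)) (nbhd_iso_rooted_iso nbhd2 nbhd1)).
by rewrite (implyP (min2 (val tau1)) (nbhd_iso_rooted_iso nbhd1 nbhd2)).
Qed.

End NeighbourhoodTypes.

Lemma sum_hist s d r (D : db s) : deg_le (dtup D) d ->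
  \sum_(tau : rtype s d r) hist d r D tau = dsize D.
Proof.
move=> D_deg; rewrite -[RHS]card_ord -sum1_card.
under eq_bigr => tau _ do rewrite ffunE -sum1_card big_mkcond /=.
rewrite exchange_big /=; apply: eq_bigr => a _.
have [tau0 nbhd0] := exists_rtype r D_deg a.
rewrite (bigD1 tau0) // inE nbhd0 big1 // => tau /negbTE ntau.
by rewrite inE; case: ifP => // /(rtype_unique nbhd0) eq_tau; rewrite eq_tau eqxx in ntau.
Qed.

Local Open Scope ring_scope.

Section L1Distance.
Variables (R : realFieldType) (I : finType).

Lemma norm_sumB_le (x y : I -> R) : `|\sum_i x i - \sum_i y i| <= \sum_i `|x i - y i|.
Proof. by rewrite -sumrB ler_norm_sum. Qed.

Lemma l1_normalize_le (x y : I -> R) (X Y : R) :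
  (forall i, 0 <= y i) -> X = \sum_i x i -> Y = \sum_i y i -> 0 < X -> 0 < Y ->
  \sum_i `|x i / X - y i / Y| <= 2 * (\sum_i `|x i - y i|) / X.
Proof.
move=> y_ge0 eX eY X_gt0 Y_gt0.
have coord_le i : `|x i / X - y i / Y| <= `|x i - y i| / X + y i * (`|Y - X| / (X * Y)).
  have -> : x i / X - y i / Y = (x i - y i) / X + y i * ((Y - X) / (X * Y)).
    by field; rewrite !gt_eqF.
  apply: le_trans (ler_normD _ _) _.
  by rewrite !normrM !normfV normrM (gtr0_norm X_gt0) (gtr0_norm Y_gt0) (ger0_norm (y_ge0 i)).
apply: le_trans (ler_sum _ (fun i _ => coord_le i)) _.
rewrite big_split /= -!mulr_suml -eY.
have -> : Y * (`|Y - X| / (X * Y)) = `|Y - X| / X by field; rewrite !gt_eqF.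
have mass_le : `|Y - X| <= \sum_i `|x i - y i| by rewrite distrC eX eY norm_sumB_le.
by rewrite -mulrDl -mulrA [X in _ <= X]mulrA ler_pM2r ?invr_gt0 //; lra.
Qed.

End L1Distance.

(** * Approximate scaling in semilinear sets *)

Section LinearSets.
Variable I : finType.

Definition lincomb (v0 : {ffun I -> nat}) (vs : seq {ffun I -> nat}) (a : nat -> nat) :
  {ffun I -> nat} := [ffun i => v0 i + \sum_(k < size vs) a k * nth v0 vs k i].

Definition lin_weight (v0 : {ffun I -> nat}) (vs : seq {ffun I -> nat}) : nat :=
  \sum_i (v0 i + \sum_(k < size vs) nth v0 vs k i).

Lemma lin_memP v0 vs v : lin_mem v0 vs v <-> exists a, v = lincomb v0 vs a.
Proof.
split=> [[a va]|[a ->]]; exists a; last by move=> i; rewrite ffunE.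
by apply/ffunP => i; rewrite ffunE va.
Qed.

(* Each coefficient loses less than 1 by truncation, while the constant
   term v0 is scaled by t - 1. *)
Lemma lincomb_truncn_l1 (R : realType) v0 vs a (t : R) : 0 <= t ->
  \sum_i `|t * (lincomb v0 vs a i)%:R
           - (lincomb v0 vs (fun k => Num.truncn (t * (a k)%:R)) i)%:R|
  <= Num.max 1 t * (lin_weight v0 vs)%:R.
Proof.
move=> t_ge0; rewrite /lin_weight natr_sum mulr_sumr; apply: ler_sum => i _.
rewrite !ffunE !natrD !natr_sum.
set w := fun k : 'I_(size vs) => (nth v0 vs k i)%:R : R.
set e := fun k : 'I_(size vs) => t * (a k)%:R - (Num.truncn (t * (a k)%:R))%:R.
have e_itv k : 0 <= e k < 1.
  have /andP [lo hi] := truncn_itv (mulr_ge0 t_ge0 (ler0n R (a k))).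
  by rewrite /e subr_ge0 lo ltrBlDr addrC natr1.
have -> : t * ((v0 i)%:R + \sum_(k < size vs) ((a k * nth v0 vs k i)%N)%:R)
    - ((v0 i)%:R + \sum_(k < size vs) ((Num.truncn (t * (a k)%:R) * nth v0 vs k i)%N)%:R)
    = (t - 1) * (v0 i)%:R + \sum_(k < size vs) e k * w k.
  rewrite mulrDr mulr_sumr opprD addrACA -sumrB mulrBl mul1r; congr (_ + _).
  by apply: eq_bigr => k _; rewrite /e /w !natrM mulrBl mulrA.
have ew_ge0 : 0 <= \sum_(k < size vs) e k * w k.
  by apply: sumr_ge0 => k _; rewrite mulr_ge0 ?ler0n //; case/andP: (e_itv k).
have ew_le : \sum_(k < size vs) e k * w k <= \sum_(k < size vs) w k.
  apply: ler_sum => k _; rewrite ler_piMl ?ler0n //.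
  by case/andP: (e_itv k) => _ /ltW.
have v0_ge0 : 0 <= ((v0 i)%:R : R) by [].
have max1 : 1 <= Num.max 1 t by rewrite le_max lexx.
have maxt : t <= Num.max 1 t by rewrite le_max lexx orbT.
rewrite ler_norml mulrDr; apply/andP; split; nra.
Qed.

End LinearSets.

Lemma semilinear_scale (R : realType) (I : finType) (M : {ffun I -> nat} -> Prop) :
  semilinear_set M -> exists V : nat, forall v (t : R), M v -> 0 <= t ->
    exists2 w, M w & \sum_i `|t * (v i)%:R - (w i)%:R| <= Num.max 1 t * V%:R.
Proof.
case=> ls M_ls; exists (\max_(p <- ls) lin_weight p.1 p.2) => v t Mv t_ge0.
have [p p_ls /lin_memP [a ->]] := proj1 (M_ls v) Mv.
exists (lincomb p.1 p.2 (fun k => Num.truncn (t * (a k)%:R))).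
  by apply/M_ls; exists p => //; apply/lin_memP; eexists.
apply: le_trans (lincomb_truncn_l1 _ _ _ t_ge0) _.
rewrite ler_wpM2l ?ler_nat ?(le_trans ler01) ?le_max ?lexx //.
exact: (leq_bigmax_seq _ p_ls).
Qed.

(** * Representatives of bounded size *)

Section Histograms.
Variables (R : realType) (s : schema) (d r : nat).

Lemma dvE (D : db s) i : dv R d r D i = hR R d r D i / (dsize D)%:R.
Proof. by rewrite !ffunE. Qed.

Lemma hRE (D : db s) i : hR R d r D i = (hist d r D i)%:R.
Proof. exact: ffunE. Qed.

Lemma sum_hR (D : db s) : deg_le (dtup D) d -> \sum_i hR R d r D i = (dsize D)%:R.
Proof.
by move=> D_deg; rewrite -(sum_hist r D_deg) natr_sum; apply: eq_bigr => i; rewrite hRE.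
Qed.

Lemma dsize_dist_le_l1 (D D' : db s) : deg_le (dtup D) d -> deg_le (dtup D') d ->
  `|(dsize D)%:R - (dsize D')%:R| <= l1 (hR R d r D) (hR R d r D').
Proof. by move=> D_deg D'_deg; rewrite -(sum_hR D_deg) -(sum_hR D'_deg) norm_sumB_le. Qed.

Lemma hist_semilinear_scale (P : db s -> Prop) : semilinear_set (@hist_set s d r P) ->
  exists V : nat, forall D, P D -> forall t : R, 0 <= t ->
    exists2 D', P D' & \sum_i `|t * hR R d r D i - hR R d r D' i| <= Num.max 1 t * V%:R.
Proof.
case/(semilinear_scale R) => V scale; exists V => D PD t t_ge0.
have [_ [D' [PD' <-]] err] := scale (hist d r D) t (ex_intro _ D (conj PD erefl)) t_ge0.
by exists D' => //; under eq_bigr => i _ do rewrite !hRE.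
Qed.

End Histograms.

Section Representatives.
Variables (R : realType) (s : schema) (d r : nat) (P : db s -> Prop) (V : nat).
Hypothesis P_deg : forall D, P D -> deg_le (dtup D) d.
Hypothesis P_scale : forall D, P D -> forall t : R, 0 <= t ->
  exists2 D', P D' & \sum_i `|t * hR R d r D i - hR R d r D' i| <= Num.max 1 t * V%:R.

(* Scale h_r(D) down by t = N / |D| and round inside the linear set. *)
Lemma rescaled_representative (D : db s) (N : nat) : P D -> (V < N <= dsize D)%N ->
  exists2 D', P D' & `|N%:R - (dsize D')%:R| <= V%:R :> R /\
    l1 (dv R d r D) (dv R d r D') <= 2 * V%:R / N%:R.
Proof.
move=> PD /andP [lt_VN le_Nn]; set n := dsize D in le_Nn *.
have n_gt0 : (0 < n)%N by apply: leq_trans le_Nn; apply: leq_ltn_trans lt_VN.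
have N_gt0 : (0 : R) < N%:R by rewrite ltr0n; apply: leq_ltn_trans lt_VN.
pose t : R := N%:R / n%:R.
have t_ge0 : 0 <= t by rewrite divr_ge0.
have t_le1 : t <= 1 by rewrite ler_pdivrMr ?ltr0n // mul1r ler_nat.
have [D' PD' err] := P_scale PD t_ge0; rewrite max_l // mul1r in err.
have mass : \sum_i t * hR R d r D i = N%:R.
  by rewrite -mulr_sumr sum_hR ?P_deg // /t mulfVK // pnatr_eq0 -lt0n.
have mass' := sum_hR R r (P_deg PD').
have size_D' : `|N%:R - (dsize D')%:R| <= V%:R :> R.
  by rewrite -mass -mass'; apply: le_trans (norm_sumB_le _ _) err.
have n'_gt0 : (0 : R) < (dsize D')%:R.
  have : V%:R < N%:R :> R by rewrite ltr_nat.
  by move: size_D'; rewrite ler_norml; lra.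
exists D' => //; split => //; rewrite /l1.
have -> : \sum_i `|dv R d r D i - dv R d r D' i|
        = \sum_i `|t * hR R d r D i / N%:R - hR R d r D' i / (dsize D')%:R|.
  apply: eq_bigr => i _; rewrite !dvE /t; congr (`|_ - _|).
  by field; rewrite (gt_eqF N_gt0) pnatr_eq0 -lt0n.
apply: le_trans (l1_normalize_le _ (esym mass) (esym mass') N_gt0 n'_gt0) _.
  by move=> i; rewrite hRE.
by rewrite ler_wpM2r ?invr_ge0 ?ler_wpM2l.
Qed.

(* Scale h_r(D') up by t = |D| / |D'|; the result is compared with h_r(D)
   through t * h_r(D') = |D| * dv_r(D'). *)
Lemma upscaled_representative (D D' : db s) : P D' -> (0 < dsize D' <= dsize D)%N ->
  exists2 D'', P D'' & l1 (hR R d r D'') (hR R d r D) <=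
    (dsize D)%:R / (dsize D')%:R * V%:R + (dsize D)%:R * l1 (dv R d r D) (dv R d r D').
Proof.
move=> PD' /andP [n'_gt0 le_n'n].
set n := dsize D in le_n'n *; set n' := dsize D' in n'_gt0 le_n'n *.
have n'_gt0R : (0 : R) < n'%:R by rewrite ltr0n.
have n_gt0R : (0 : R) < n%:R by rewrite ltr0n (leq_trans n'_gt0).
pose t : R := n%:R / n'%:R.
have t_ge1 : 1 <= t by rewrite ler_pdivlMr // mul1r ler_nat.
have [D'' PD'' err] := P_scale PD' (le_trans ler01 t_ge1); rewrite max_r // in err.
have coord_le i : `|hR R d r D'' i - hR R d r D i| <=
    `|t * hR R d r D' i - hR R d r D'' i| + n%:R * `|dv R d r D i - dv R d r D' i|.
  have -> : hR R d r D'' i - hR R d r D i =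
      - (t * hR R d r D' i - hR R d r D'' i) - n%:R * (dv R d r D i - dv R d r D' i).
    by rewrite !dvE /t; field; rewrite !gt_eqF.
  by rewrite (le_trans (ler_normB _ _)) // normrN normrM (gtr0_norm n_gt0R).
exists D'' => //; rewrite /l1 mulr_sumr.
by apply: le_trans (ler_sum _ (fun i _ => coord_le i)) _; rewrite big_split lerD.
Qed.

Variables (lam : R) (K : nat).
Hypotheses (lam_gt0 : 0 < lam) (lam_le1 : lam <= 1) (lt_V_lamK : 32 * V%:R < lam * K%:R).

Let K_gt0 : (0 < K)%N.
Proof. by rewrite -(ltr0n R) -(pmulr_rgt0 _ lam_gt0) (le_lt_trans _ lt_V_lamK) ?mulr_ge0. Qed.

Lemma small_representative (D : db s) : P D -> (K + 2 * V < dsize D)%N ->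
  exists D', [/\ P D', (K <= dsize D' <= K + 2 * V)%N &
    l1 (dv R d r D) (dv R d r D') <= lam / 16].
Proof.
move=> PD large_D; have [|D' PD' [size_D' l1_le]] := rescaled_representative (N := K + V) PD.
  by rewrite -{1}[V]add0n ltn_add2r K_gt0 (leq_trans _ (ltnW large_D)) // leq_add2l leq_pmull.
exists D'; split => //.
  move: size_D'; rewrite ler_norml natrD => /andP [lo hi].
  by rewrite -!(ler_nat R) !natrD addr0; apply/andP; split; lra.
apply: le_trans l1_le _; rewrite ler_pdivrMr ?ltr0n ?addn_gt0 ?K_gt0 //.
rewrite natrD; have := mulr_ge0 (ltW lam_gt0) (ler0n R V); move: lt_V_lamK; nra.
Qed.

Lemma close_representative (D D' : db s) : deg_le (dtup D) d -> P D' ->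
  (K <= dsize D' <= dsize D)%N -> l1 (dv R d r D) (dv R d r D') <= lam / 8 ->
  exists2 D'', P D'' & l1 (hR R d r D'') (hR R d r D) <= lam * (minn (dsize D'') (dsize D))%:R.
Proof.
move=> D_deg PD' /andP [le_Kn' le_n'n] near_D.
have n'_gt0 : (0 < dsize D')%N := leq_trans K_gt0 le_Kn'.
have [|D'' PD'' l1_le] := upscaled_representative (D := D) PD'; first by rewrite n'_gt0.
set n := (dsize D)%:R in l1_le *; set L := l1 _ _ in l1_le *.
have V_le : n / (dsize D')%:R * V%:R <= n * (lam / 32).
  have lamK_le : lam * K%:R <= lam * (dsize D')%:R by rewrite ler_wpM2l ?ler_nat // ltW.
  rewrite mulrAC -mulrA ler_wpM2l // ler_pdivrMr ?ltr0n //.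
  by move: lt_V_lamK; lra.
have {V_le} L_le : L <= n * (lam / 32) + n * (lam / 8).
  by apply: le_trans l1_le _; rewrite lerD // ler_wpM2l.
have := dsize_dist_le_l1 R r (P_deg PD'') D_deg; rewrite -/n -/L ler_norml => /andP [lo hi].
have lam_n_ge0 : 0 <= lam * n by rewrite mulr_ge0 // ltW.
exists D'' => //; rewrite -/L.
case: leqP => [le_n''n | _]; last by rewrite -/n; lra.
(* lam |D''| >= lam (|D| - L) >= lam |D| - L >= 27/32 lam |D| >= L *)
have : 0 <= lam * ((dsize D'')%:R - n + L).
  apply: mulr_ge0; [exact: ltW | by move: lo; lra].
have : 0 <= (1 - lam) * L by rewrite mulr_ge0 ?subr_ge0 //; lra.
lra.
Qed.

End Representatives.

Unset Implicit Arguments. Set Strict Implicit. Set Printing Implicit Defensive.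

Theorem theorem9 (R : realType) (s : schema) (d : nat) (C P : db s -> Prop)
  (hd : (2 <= d)%N)
  (hCdeg : degree_le_class d C)
  (hCrem : tuple_removal_closed C)
  (hCiso : iso_closed C)
  (hPiso : iso_closed P)
  (hPC : forall D, P D -> C D)
  (hhyp : hyperfinite R P C)
  (eps : R) (heps : 0 < eps <= 1)
  (r : nat) (lam : R) (hlam : 0 < lam <= 1)
  (hloc : forall D D' : db s, P D -> C D' ->
     l1 (hR R d r D) (hR R d r D') <= lam * (minn (dsize D) (dsize D'))%:R ->
     close_to d eps P D')
  (hsl : semilinear_set (@hist_set s d r P)) :
  exists (nmin nmax : nat) (f mu : R),
    [/\ 0 < f < 1, 0 < mu < 1 &
    forall D : db s, C D -> (nmax < dsize D)%N ->
      (P D -> exists D' : db s,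
          [/\ P D', (nmin <= dsize D' <= nmax)%N &
              l1 (dv R d r D) (dv R d r D') <= f - mu])
      /\
      (far_from d eps P D -> forall D' : db s, P D' ->
          (nmin <= dsize D' <= nmax)%N ->
          l1 (dv R d r D) (dv R d r D') > f + mu)].
Proof.
have [V P_scale] := hist_semilinear_scale R hsl.
have P_deg D : P D -> deg_le (dtup D) d by move=> /hPC /hCdeg.
have /andP [lam_gt0 lam_le1] := hlam.
pose K := (Num.truncn (32 * V%:R / lam)).+1.
have lt_V_lamK : 32 * V%:R < lam * K%:R.
  by rewrite [lam * _]mulrC -ltr_pdivrMr //; exact: truncnS_gt.
exists K, (K + 2 * V)%N, (3 * lam / 32), (lam / 32).
split; [apply/andP; split; lra.. |] => D CD large_D; split.
  move=> PD; have [D' [PD' size_D' l1_le]] :=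
    small_representative P_deg P_scale lam_gt0 lt_V_lamK PD large_D.
  by exists D'; split => //; lra.
move=> far_D D' PD' /andP [le_KD' le_D'max]; rewrite ltNge; apply/negP => near_D.
have le_D'D : (dsize D' <= dsize D)%N := ltnW (leq_ltn_trans le_D'max large_D).
have near_D8 : l1 (dv R d r D) (dv R d r D') <= lam / 8 by lra.
have [|D'' PD'' l1_le] := close_representative P_deg P_scale lam_gt0 lam_le1 lt_V_lamK
  (hCdeg D CD) PD' _ near_D8; first by rewrite le_KD'.
exact/far_D/(hloc D'' D PD'' CD).
Qed.
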